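(* Let $X$ be a real Hausdorff locally convex topological vector space, let $f:X\to\overline{\mathbb R}$ be proper, convex and lower semicontinuous, and let $U\subseteq\operatorname{dom} f$ be segment-dense in $\operatorname{dom} f$. Then $f=\overline{f_U}$ on $X$ and $\inf_{x\in U}f(x)=\inf_{x\in X}f(x)$.
   Context: $\overline{\mathbb R}=\mathbb R\cup\{\pm\infty\}$; $\operatorname{dom} f=\{x:f(x)<+\infty\}$; proper: $\operatorname{dom} f\ne\emptyset$ and $f>-\infty$. $\operatorname{epi} f_U=\{(u,r)\in U\times\mathbb R:f(u)\le r\}$ and $\overline{f_U}:X\to\overline{\mathbb R}$ is the function whose epigraph is $\operatorname{cl}(\operatorname{epi} f_U)$ in $X\times\mathbb R$, i.e. $\overline{f_U}(x)=\inf\{r:(x,r)\in\operatorname{cl}(\operatorname{epi} f_U)\}$ ($\inf\emptyset=+\infty$). $[x,y]=\{x+t(y-x):t\in[0,1]\}$. Segment-dense: for convex $V$ and $U\subseteq V$, $U$ is segment-dense in $V$ if for each $x\in V$ there exists $y\in U$ such that $x$ is a cluster point of $[x,y]\cap U$. *)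

From Stdlib Require Import Reals Lra Classical.
Open Scope R_scope.

Inductive ER : Type := Fin (r : R) | PInf | NInf.

Definition ER_le (a b : ER) : Prop :=
  match a, b with
  | NInf, _ => True
  | _, PInf => True
  | Fin x, Fin y => x <= y
  | _, _ => False
  end.

Definition is_ERinf (S : ER -> Prop) (m : ER) : Prop :=
  (forall y, S y -> ER_le m y) /\
  (forall l, (forall y, S y -> ER_le l y) -> ER_le l m).

Record LCS : Type := {
  car :> Type;
  vzero : car;
  vadd : car -> car -> car;
  vopp : car -> car;
  vscal : R -> car -> car;
  vadd_assoc : forall x y z, vadd x (vadd y z) = vadd (vadd x y) z;
  vadd_comm : forall x y, vadd x y = vadd y x;
  vadd_zero : forall x, vadd x vzero = x;
  vadd_opp : forall x, vadd x (vopp x) = vzero;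
  vscal_one : forall x, vscal 1 x = x;
  vscal_assoc : forall a b x, vscal a (vscal b x) = vscal (a * b) x;
  vscal_distr_l : forall a x y, vscal a (vadd x y) = vadd (vscal a x) (vscal a y);
  vscal_distr_r : forall a b x, vscal (a + b) x = vadd (vscal a x) (vscal b x);
  is_open : (car -> Prop) -> Prop;
  open_full : is_open (fun _ => True);
  open_inter : forall A B, is_open A -> is_open B -> is_open (fun x => A x /\ B x);
  open_union : forall (F : (car -> Prop) -> Prop),
      (forall A, F A -> is_open A) -> is_open (fun x => exists A, F A /\ A x);
  vadd_cont : forall x y W, is_open W -> W (vadd x y) ->
      exists A B, is_open A /\ A x /\ is_open B /\ B y /\
        (forall u v, A u -> B v -> W (vadd u v));
  vscal_cont : forall a x W, is_open W -> W (vscal a x) ->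
      exists d B, 0 < d /\ is_open B /\ B x /\
        (forall b u, Rabs (b - a) < d -> B u -> W (vscal b u));
  hausdorff : forall x y, x <> y ->
      exists A B, is_open A /\ A x /\ is_open B /\ B y /\
        (forall z, ~ (A z /\ B z));
  locally_convex : forall W, is_open W -> W vzero ->
      exists V, is_open V /\ V vzero /\ (forall z, V z -> W z) /\
        (forall u v t, V u -> V v -> 0 <= t <= 1 ->
           V (vadd (vscal (1 - t) u) (vscal t v)))
}.

Arguments vadd {_}. Arguments vscal {_}. Arguments vopp {_}.
Arguments is_open {_}.

Generalizable Variables X.

Definition dom `{X : LCS} (f : X -> ER) (x : X) : Prop := f x <> PInf.

Definition proper `{X : LCS} (f : X -> ER) : Prop :=
  (exists x, dom f x) /\ (forall x, f x <> NInf).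

(* convex: the epigraph is convex *)
Definition convex_fun `{X : LCS} (f : X -> ER) : Prop :=
  forall x y r s t, ER_le (f x) (Fin r) -> ER_le (f y) (Fin s) -> 0 <= t <= 1 ->
    ER_le (f (vadd (vscal (1 - t) x) (vscal t y))) (Fin ((1 - t) * r + t * s)).

Definition lsc `{X : LCS} (f : X -> ER) : Prop :=
  forall x r, ~ ER_le (f x) (Fin r) ->
    exists W, is_open W /\ W x /\ (forall z, W z -> ~ ER_le (f z) (Fin r)).

Definition convex_set `{X : LCS} (V : X -> Prop) : Prop :=
  forall u v t, V u -> V v -> 0 <= t <= 1 -> V (vadd (vscal (1 - t) u) (vscal t v)).

Definition segment `{X : LCS} (x y : X) (z : X) : Prop :=
  exists t, 0 <= t <= 1 /\ z = vadd x (vscal t (vadd y (vopp x))).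

Definition cluster_point `{X : LCS} (S : X -> Prop) (x : X) : Prop :=
  forall W, is_open W -> W x -> exists z, S z /\ W z /\ z <> x.

Definition segment_dense `{X : LCS} (U V : X -> Prop) : Prop :=
  forall x, V x -> exists y, U y /\ cluster_point (fun z => segment x y z /\ U z) x.

Definition epi_U `{X : LCS} (f : X -> ER) (U : X -> Prop) (p : X * R) : Prop :=
  U (fst p) /\ ER_le (f (fst p)) (Fin (snd p)).

(* closure in the product topology of X x R *)
Definition closure_XR `{X : LCS} (E : X * R -> Prop) (p : X * R) : Prop :=
  forall W e, is_open W -> W (fst p) -> 0 < e ->
    exists q, E q /\ W (fst q) /\ Rabs (snd q - snd p) < e.

(* overline{f_U}(x) = inf { r : (x,r) in cl(epi f_U) } (inf of empty set = +oo) *)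
Definition is_closure_fU_value `{X : LCS} (f : X -> ER) (U : X -> Prop) (x : X) (m : ER) : Prop :=
  is_ERinf (fun y => exists r, y = Fin r /\ closure_XR (epi_U f U) (x, r)) m.

(* A point [x] of [dom f] is approached along the segment [[x, y]] by points
   [z = x + t (y - x)] of [U] with [t -> 0]; convexity gives
   [f z <= (1 - t) f x + t f y], so [(x, f x)] lies in the closure of [epi f_U]
   and [overline{f_U} <= f].  Conversely lower semicontinuity keeps [f] below
   every closure value, so [overline{f_U} = f].  The same closure points show
   that every lower bound of [f] on [U] bounds [f] on all of [X], hence the two
   infima agree.

   That the parameter [t] must be small follows from local convexity: a convex
   neighbourhood [V] of [0] missing [delta d] contains no [t d] with [t >= delta]. *)
From Stdlib Require Import Reals Lra Classical.
Open Scope R_scope.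

Section VectorSpace.
Variable X : LCS.
Implicit Types x y z : X.

Lemma vadd0l x : vadd (vzero X) x = x.
Proof. rewrite vadd_comm; apply vadd_zero. Qed.

Lemma vaddNl x : vadd (vopp x) x = vzero X.
Proof. rewrite vadd_comm; apply vadd_opp. Qed.

Lemma vaddI x y z : vadd x y = vadd x z -> y = z.
Proof.
  intro H.
  assert (E : vadd (vopp x) (vadd x y) = vadd (vopp x) (vadd x z)) by now rewrite H.
  now rewrite !vadd_assoc, vaddNl, !vadd0l in E.
Qed.

Lemma vscal0l x : vscal 0 x = vzero X.
Proof.
  apply (vaddI (vscal 0 x)).
  rewrite vadd_zero, <- vscal_distr_r. f_equal. ring.
Qed.

Lemma vscal0r (a : R) : vscal a (vzero X) = vzero X.
Proof.
  apply (vaddI (vscal a (vzero X))).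
  now rewrite vadd_zero, <- vscal_distr_l, vadd_zero.
Qed.

Lemma vscalNl a x : vscal (- a) x = vopp (vscal a x).
Proof.
  apply (vaddI (vscal a x)).
  rewrite vadd_opp, <- vscal_distr_r. replace (a + - a) with 0 by ring.
  apply vscal0l.
Qed.

Lemma vscalNr a x : vscal a (vopp x) = vopp (vscal a x).
Proof.
  apply (vaddI (vscal a x)).
  rewrite vadd_opp, <- vscal_distr_l, vadd_opp. apply vscal0r.
Qed.

Lemma vscal_neq0 a x : a <> 0 -> x <> vzero X -> vscal a x <> vzero X.
Proof.
  intros Ha Hx H0. apply Hx.
  replace x with (vscal (/ a) (vscal a x)).
  - rewrite H0. apply vscal0r.
  - rewrite vscal_assoc, Rinv_l by exact Ha. apply vscal_one.
Qed.

Lemma vsub_neq0 x y : y <> x -> vadd y (vopp x) <> vzero X.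
Proof.
  intros Hyx H0. apply Hyx.
  now rewrite <- (vadd_zero X y), <- (vaddNl x), vadd_assoc, H0, vadd0l.
Qed.

Lemma vaddKl x y : vadd (vadd x y) (vopp x) = y.
Proof. now rewrite (vadd_comm _ x y), <- vadd_assoc, vadd_opp, vadd_zero. Qed.

Lemma convex_comb_segment t x y :
  vadd (vscal (1 - t) x) (vscal t y) = vadd x (vscal t (vadd y (vopp x))).
Proof.
  unfold Rminus. rewrite vscal_distr_r, vscal_one, vscalNl, vscal_distr_l, vscalNr.
  rewrite <- vadd_assoc. f_equal. apply vadd_comm.
Qed.

End VectorSpace.

Section Topology.
Variable X : LCS.
Implicit Types x y z : X.

Lemma open_translate (V : X -> Prop) x : is_open V -> V (vzero X) ->
  exists N, is_open N /\ N x /\ (forall z, N z -> V (vadd z (vopp x))).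
Proof.
  intros HV HV0.
  set (good A := is_open A /\ forall u, A u -> V (vadd u (vopp x))).
  exists (fun z => exists A, good A /\ A z). split; [|split].
  - apply (open_union X good). now intros A [HA _].
  - rewrite <- (vadd_opp X x) in HV0.
    destruct (vadd_cont X x (vopp x) V HV HV0) as [A [B [HA [HAx [_ [HBx HAB]]]]]].
    exists A. split; [split|]; auto.
  - intros z [A [[_ HAV] HAz]]. auto.
Qed.

Lemma convex_nbhd_avoiding w : w <> vzero X ->
  exists V : X -> Prop, is_open V /\ V (vzero X) /\ convex_set V /\ ~ V w.
Proof.
  intro Hw.
  destruct (hausdorff X _ _ (not_eq_sym Hw)) as [A [B [HA [HA0 [_ [HBw HAB]]]]]].
  destruct (locally_convex X A HA HA0) as [V [HV [HV0 [HVA HVc]]]].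
  exists V. repeat split; auto.
  intro HVw. apply (HAB w). auto.
Qed.

(* [delta d] is the convex combination of [0] and [t d] with weight [delta / t]. *)
Lemma convex_ray_avoiding (V : X -> Prop) d delta t :
  convex_set V -> V (vzero X) -> ~ V (vscal delta d) -> 0 < delta <= t ->
  ~ V (vscal t d).
Proof.
  intros HVc HV0 Hdelta Ht HVt. apply Hdelta.
  assert (Hs : 0 <= delta / t <= 1).
  { split.
    - apply Rlt_le, Rdiv_lt_0_compat; lra.
    - apply Rmult_le_reg_r with t; [lra|]. field_simplify; lra. }
  assert (H := HVc _ _ (delta / t) HV0 HVt Hs).
  rewrite vscal0r, vadd0l, vscal_assoc in H.
  now replace (delta / t * t) with delta in H by (field; lra).
Qed.

Lemma ray_nbhd_small_param x d delta : d <> vzero X -> 0 < delta ->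
  exists N, is_open N /\ N x /\
    (forall t, 0 <= t -> N (vadd x (vscal t d)) -> t < delta).
Proof.
  intros Hd Hdelta.
  destruct (convex_nbhd_avoiding (vscal delta d)) as [V [HV [HV0 [HVc HVd]]]].
  { apply vscal_neq0; lra || exact Hd. }
  destruct (open_translate V x HV HV0) as [N [HN [HNx HNV]]].
  exists N. repeat split; auto.
  intros t Ht HNt. apply Rnot_le_lt. intro Hle.
  apply (convex_ray_avoiding V d delta t HVc HV0 HVd (conj Hdelta Hle)).
  specialize (HNV _ HNt). now rewrite vaddKl in HNV.
Qed.

End Topology.

Lemma ER_le_PInf (a : ER) : ER_le a PInf.
Proof. now destruct a. Qed.

Lemma ER_le_Fin_trans (a : ER) q r : ER_le a (Fin q) -> q <= r -> ER_le a (Fin r).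
Proof. destruct a; simpl; intros; auto; lra. Qed.

Lemma is_ERinf_same_lbs (S T : ER -> Prop) :
  (forall l, (forall y, S y -> ER_le l y) <-> (forall y, T y -> ER_le l y)) ->
  forall m, is_ERinf S m <-> is_ERinf T m.
Proof.
  intros Hlb m. split; intros [Hm Hglb]; split.
  - now apply Hlb.
  - intros l Hl. apply Hglb. now apply Hlb.
  - now apply Hlb.
  - intros l Hl. apply Hglb. now apply Hlb.
Qed.

Section EpigraphClosure.
Variables (X : LCS) (f : X -> ER) (U : X -> Prop).

Lemma closure_epi_le x r : proper f -> lsc f ->
  closure_XR (epi_U f U) (x, r) -> ER_le (f x) (Fin r).
Proof.
  intros Hp Hl Hcl. apply NNPP; intro Hn.
  assert (Hr' : exists r', r < r' /\ ~ ER_le (f x) (Fin r')).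
  { destruct (f x) as [c| |] eqn:E.
    - simpl in Hn. exists ((c + r) / 2). simpl. lra.
    - exists (r + 1). simpl. split; [lra | auto].
    - exfalso. now apply (proj2 Hp x). }
  destruct Hr' as [r' [Hrr' Hn']].
  destruct (Hl x r' Hn') as [W [HW [HWx HWn]]].
  destruct (Hcl W (r' - r) HW HWx ltac:(lra)) as [[q s] [[_ Hq] [HWq Hs]]].
  simpl in *. apply (HWn q HWq), (ER_le_Fin_trans _ s); auto.
  apply Rabs_def2 in Hs. lra.
Qed.

Lemma lb_epi_closure l x r :
  (forall y, U y -> ER_le l (f y)) ->
  closure_XR (epi_U f U) (x, r) -> ER_le l (Fin r).
Proof.
  intros Hl Hcl.
  destruct l as [c| |]; simpl; auto.
  - apply Rnot_lt_le. intro Hrc.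
    destruct (Hcl (fun _ => True) (c - r) (open_full X) I ltac:(lra))
      as [[q s] [[Uq Hq] [_ Hs]]].
    simpl in *. apply Rabs_def2 in Hs.
    specialize (Hl q Uq). destruct (f q); simpl in *; lra.
  - destruct (Hcl (fun _ => True) 1 (open_full X) I ltac:(lra))
      as [[q s] [[Uq Hq] _]].
    simpl in *. specialize (Hl q Uq). now destruct (f q).
Qed.

Lemma dom_in_closure_epi x a :
  proper f -> convex_fun f -> (forall y, U y -> dom f y) ->
  segment_dense U (dom f) -> f x = Fin a -> closure_XR (epi_U f U) (x, a).
Proof.
  intros Hp Hc HU Hsd Hfx W e HW HWx He. simpl in HWx |- *.
  destruct (Hsd x ltac:(unfold dom; rewrite Hfx; discriminate)) as [y [Uy Hcl]].
  destruct (f y) as [b| |] eqn:Hfy;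
    [| now exfalso; apply (HU y Uy) | now exfalso; apply (proj2 Hp y)].
  set (d := vadd y (vopp x)).
  assert (Hd : d <> vzero X).
  { apply vsub_neq0. intros ->.
    destruct (Hcl (fun _ => True) (open_full X) I) as [z [[[t [_ Hz]] _] [_ Hzx]]].
    apply Hzx. now rewrite Hz, vadd_opp, vscal0r, vadd_zero. }
  set (k := Rabs (b - a)).
  assert (Hk : 0 <= k) by apply Rabs_pos.
  set (delta := e / (k + 1)).
  assert (Hdelta : 0 < delta) by (apply Rdiv_lt_0_compat; lra).
  assert (Hdeltak : delta * k < e).
  { assert (delta * (k + 1) = e) by (unfold delta; field; lra). nra. }
  destruct (ray_nbhd_small_param X x d delta Hd Hdelta) as [N [HN [HNx HNsmall]]].
  destruct (Hcl _ (open_inter X W N HW HN) (conj HWx HNx))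
    as [z [[[t [Ht Hz]] Uz] [[HWz HNz] _]]].
  fold d in Hz. subst z.
  assert (Htdelta : t < delta) by (apply HNsmall; tauto).
  exists (vadd x (vscal t d), (1 - t) * a + t * b). simpl.
  split; [split | split]; auto.
  - unfold d. rewrite <- convex_comb_segment.
    apply Hc; [rewrite Hfx | rewrite Hfy |]; simpl; lra.
  - replace ((1 - t) * a + t * b - a) with (t * (b - a)) by ring.
    rewrite Rabs_mult, (Rabs_right t) by lra. fold k. nra.
Qed.

End EpigraphClosure.

Theorem mainTheorem7 (X : LCS) (f : X -> ER) (U : X -> Prop) :
  proper f -> convex_fun f -> lsc f ->
  (forall x, U x -> dom f x) ->
  segment_dense U (dom f) ->
  (forall x, is_closure_fU_value f U x (f x)) /\
  (forall m : ER,
     is_ERinf (fun y => exists x, U x /\ y = f x) m <->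
     is_ERinf (fun y => exists x, y = f x) m).
Proof.
  intros Hp Hc Hl HU Hsd.
  assert (Hclosure : forall x a, f x = Fin a -> closure_XR (epi_U f U) (x, a))
    by (intros; now apply dom_in_closure_epi).
  split.
  - intro x. split.
    + intros y [r [-> Hr]]. now apply (closure_epi_le X f U).
    + intros l Hlb. destruct (f x) as [a| |] eqn:E.
      * apply Hlb. exists a. auto.
      * apply ER_le_PInf.
      * exfalso. now apply (proj2 Hp x).
  - apply is_ERinf_same_lbs. intro l. split.
    + intros Hlb y [x ->].
      destruct (f x) as [a| |] eqn:E.
      * apply (lb_epi_closure X f U l x); auto.
        intros y Uy. apply Hlb. eauto.
      * apply ER_le_PInf.
      * exfalso. now apply (proj2 Hp x).
    + intros Hlb y [x [_ ->]]. apply Hlb. eauto.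
Qed.
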